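(* Let $Q^n,Q^{n-1}$ be grid functions satisfying the boundary conditions with symmetric trace-free values, and $\overline P_{ijk}=\frac32P(Q^n_{ijk})-\frac12P(Q^{n-1}_{ijk})$. Define, for matrix-valued grid functions $Q$, $\mathbb{A}(Q)_{ijk}=\frac{Q_{ijk}}{\Delta t}-\frac{ML_1}{2}\Delta_hQ_{ijk}+\frac M2\big(\overline P_{ijk}:Q_{ijk}\big)\overline P_{ijk}-M\frac{L_2+L_3}{4}\alpha_h(Q)_{ijk}$. Then $\mathbb{A}$ is symmetric and positive definite on the space $V$ of matrix-valued grid functions satisfying the boundary conditions with symmetric trace-free values, i.e. $\langle\mathbb{A}(Q^1),Q^2\rangle_h=\langle Q^1,\mathbb{A}(Q^2)\rangle_h$ for all $Q^1,Q^2\in V$, and $\langle\mathbb{A}(Q),Q\rangle_h>0$ for all $Q\in V$, $Q\neq0$.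
   Context: Parameters: $a,b\in\mathbb{R}$, $c,L_1,L_2,L_3,M>0$, $\Delta t>0$, and $A_0>0$ such that $\inf\{\frac a2\operatorname{tr}(Q^2)-\frac b3\operatorname{tr}(Q^3)+\frac c4(\operatorname{tr}(Q^2))^2+A_0:\ Q\in\mathbb{R}^{3\times3}\text{ symmetric}\}>0$. For symmetric $Q$: $r(Q)=\sqrt{2(\frac a2\operatorname{tr}(Q^2)-\frac b3\operatorname{tr}(Q^3)+\frac c4(\operatorname{tr}(Q^2))^2+A_0)}$, $S(Q)=aQ-b(Q^2-\frac13\operatorname{tr}(Q^2)I)+c\operatorname{tr}(Q^2)Q$, $P(Q)=S(Q)/r(Q)$; $A:B=\sum_{i,j}A_{ij}B_{ij}$. Grid: $N\in\mathbb{N}$, $h=1/(N+1)$. Grid functions are families $(f_{ijk})_{(i,j,k)\in\mathbb{Z}^3}$ of real $3\times3$ matrices; the boundary conditions mean $f_{ijk}=0$ whenever $(i,j,k)\notin\{1,\dots,N\}^3$. $D^\pm_1f_{ijk}=\pm(f_{i\pm1,j,k}-f_{ijk})/h$, $D^c_1f_{ijk}=(f_{i+1,j,k}-f_{i-1,j,k})/(2h)$, analogously in directions 2, 3. $\Delta_hf=\sum_\alpha D^-_\alpha D^+_\alpha f$, $\alpha_h(Q)_{ws}=\sum_\beta[D^c_wD^c_\beta Q_{s\beta}+D^c_sD^c_\beta Q_{w\beta}]-\frac23\sum_{\beta,\gamma}D^c_\beta D^c_\gamma Q_{\beta\gamma}\delta_{ws}$. $\langle A,B\rangle_h=h^3\sum_{i,j,k=0}^{N+1}A_{ijk}:B_{ijk}$.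 *)

From HB Require Import structures.
From mathcomp Require Import all_boot all_order all_algebra.
Set Implicit Arguments. Unset Strict Implicit. Unset Printing Implicit Defensive.
Import Order.TTheory GRing.Theory Num.Theory.
Local Open Scope ring_scope.

Section Defs.
Variable R : rcfType.

Definition gridfun := int -> int -> int -> 'M[R]_3.

Definition frob (A B : 'M[R]_3) : R := \sum_(i < 3) \sum_(j < 3) A i j * B i j.

Definition bulk (a b c A0 : R) (Q : 'M[R]_3) : R :=
  a / 2 * \tr (Q *m Q) - b / 3 * \tr (Q *m Q *m Q)
  + c / 4 * (\tr (Q *m Q)) ^+ 2 + A0.
Definition rQ (a b c A0 : R) (Q : 'M[R]_3) : R := Num.sqrt (2 * bulk a b c A0 Q).
Definition SQ (a b c : R) (Q : 'M[R]_3) : 'M[R]_3 :=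
  a *: Q - b *: (Q *m Q - (\tr (Q *m Q) / 3) *: 1%:M) + (c * \tr (Q *m Q)) *: Q.
Definition PQ (a b c A0 : R) (Q : 'M[R]_3) : 'M[R]_3 :=
  (rQ a b c A0 Q)^-1 *: SQ a b c Q.

Definition symmetric_mx (Q : 'M[R]_3) : Prop := Q^T = Q.
Definition tracefree_sym (Q : 'M[R]_3) : Prop := Q^T = Q /\ \tr Q = 0.

Definition hN (N : nat) : R := (N.+1%:R)^-1.

Definition in_grid (N : nat) (i : int) : bool := (1 <= i) && (i <= N%:Z).

Definition bc (N : nat) (f : gridfun) : Prop :=
  forall i j k, ~~ [&& in_grid N i, in_grid N j & in_grid N k] -> f i j k = 0.

Definition inV (N : nat) (f : gridfun) : Prop :=
  bc N f /\ forall i j k, tracefree_sym (f i j k).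

Definition shift (d : 'I_3) (s : int) (f : gridfun) : gridfun :=
  fun i j k => match val d with
               | 0 => f (i + s) j k
               | 1 => f i (j + s) k
               | _ => f i j (k + s)
               end.

Definition Dp (h : R) (d : 'I_3) (f : gridfun) : gridfun :=
  fun i j k => h^-1 *: (shift d 1 f i j k - f i j k).
Definition Dm (h : R) (d : 'I_3) (f : gridfun) : gridfun :=
  fun i j k => h^-1 *: (f i j k - shift d (-1) f i j k).
Definition Dc (h : R) (d : 'I_3) (f : gridfun) : gridfun :=
  fun i j k => (2 * h)^-1 *: (shift d 1 f i j k - shift d (-1) f i j k).

Definition lap_h (h : R) (f : gridfun) : gridfun :=
  fun i j k => \sum_(d < 3) Dm h d (Dp h d f) i j k.

Definition alpha_h (h : R) (Q : gridfun) : gridfun :=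
  fun i j k => \matrix_(w < 3, s < 3)
    (\sum_(be < 3) (Dc h w (Dc h be Q) i j k s be + Dc h s (Dc h be Q) i j k w be)
     - 2 / 3 * (\sum_(be < 3) \sum_(ga < 3) Dc h be (Dc h ga Q) i j k be ga)
       * (w == s)%:R).

Definition inner_h (N : nat) (f g : gridfun) : R :=
  hN N ^+ 3 * \sum_(0 <= i < N.+2) \sum_(0 <= j < N.+2) \sum_(0 <= k < N.+2)
    frob (f i%:Z j%:Z k%:Z) (g i%:Z j%:Z k%:Z).

Definition Pbar (a b c A0 : R) (Qn Qn1 : gridfun) : gridfun :=
  fun i j k => (3 / 2) *: PQ a b c A0 (Qn i j k) - (1 / 2) *: PQ a b c A0 (Qn1 i j k).

Definition opA (a b c A0 L1 L2 L3 M dt : R) (N : nat) (Qn Qn1 : gridfun)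
  (Q : gridfun) : gridfun :=
  let h := hN N in
  let Pb := Pbar a b c A0 Qn Qn1 in
  fun i j k =>
    dt^-1 *: Q i j k - (M * L1 / 2) *: lap_h h Q i j k
    + (M / 2 * frob (Pb i j k) (Q i j k)) *: Pb i j k
    - (M * (L2 + L3) / 4) *: alpha_h h Q i j k.

End Defs.

From mathcomp Require Import all_boot all_order all_algebra.
From mathcomp Require Import zify ring.
From Stdlib Require Import FunctionalExtensionality Classical.
Import Order.TTheory GRing.Theory Num.Theory.
Set Implicit Arguments. Unset Strict Implicit. Unset Printing Implicit Defensive.
Local Open Scope ring_scope.

(* Summation by parts on the window {0,...,N+1}, on whose outer layer all fields
   with the boundary conditions vanish, turns <A(Q1), Q2>_h into h^3 times the
   bilinear form [energy]:
     (1/dt) <Q1,Q2> + (M L1/2) sum_d <D+_d Q1, D+_d Q2>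
     + (M/2) sum (Pbar:Q1)(Pbar:Q2) + (M (L2+L3)/2) sum_s <(div Q1)_s, (div Q2)_s>.
   For the alpha_h term, Q2 being symmetric and trace-free means that only twice
   the gradient of div Q1 pairs with Q2, and one summation by parts turns this
   into -2 <div Q1, div Q2>.  The form is visibly symmetric and its diagonal is
   at least (1/dt) <Q,Q> > 0.  Nothing about Pbar is used beyond its being a
   matrix field. *)

Lemma psumr_gt0 (R : numDomainType) (I : eqType) (r : seq I) (F : I -> R) i :
  (forall j, 0 <= F j) -> i \in r -> 0 < F i -> 0 < \sum_(j <- r) F j.
Proof.
move=> F_ge0 ri Fi; rewrite lt0r sumr_ge0 ?andbT // psumr_neq0 //.
by apply/hasP; exists i.
Qed.

Lemma grid_ext (T : Type) (u v : int -> int -> int -> T) :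
  (forall i j k, u i j k = v i j k) -> u = v.
Proof. by move=> uv; do 3 apply: functional_extensionality => ?; apply: uv. Qed.

Lemma big_nat_window (V : nmodType) (G : nat -> V) lo n m :
  (lo + n <= m)%N -> (forall i, (i < lo)%N || (lo + n <= i)%N -> G i = 0) ->
  \sum_(0 <= i < m) G i = \sum_(0 <= i < n) G (i + lo)%N.
Proof.
move=> le_m G0.
rewrite (big_cat_nat (n := lo)) ?(leq_trans (leq_addr n lo)) //=.
rewrite (big_cat_nat (n := lo + n) (leq_addr n lo) le_m) /=.
rewrite [X in X + _]big_nat_cond big1 ?add0r; last first.
  by move=> i /andP[/andP[_ lt_i] _]; apply: G0; rewrite lt_i.
rewrite [X in _ + X]big_nat_cond [X in _ + X]big1 ?addr0; last first.
  by move=> i /andP[/andP[le_i _] _]; apply: G0; rewrite le_i orbT.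
by rewrite -{1}[lo]add0n big_addn addKn.
Qed.

(* A shift by at most one moves a field vanishing outside {1..n} only inside the
   window {0..n+1}: this is why summation by parts needs no larger window than
   the one of inner_h. *)
Lemma sum_window_interior (V : nmodType) n (s : int) (F : int -> V) :
  -1 <= s <= 1 -> (forall i, ~~ in_grid n i -> F i = 0) ->
  \sum_(0 <= i < n.+2) F (i%:Z + s) = \sum_(0 <= i < n) F i.+1%:Z.
Proof.
move=> s_range F0; have [lo lo_def] : exists lo : nat, lo%:Z = 1 - s.
  by exists `|1 - s|%N; lia.
rewrite (big_nat_window (lo := lo) (n := n)); last 2 first.
- by lia.
- by move=> i out_i; apply: F0; rewrite /in_grid; lia.
by apply: eq_bigr => i _; congr F; lia.
Qed.

Lemma sum_window_shift (V : nmodType) n (s : int) (F : int -> V) :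
  -1 <= s <= 1 -> (forall i, ~~ in_grid n i -> F i = 0) ->
  \sum_(0 <= i < n.+2) F (i%:Z + s) = \sum_(0 <= i < n.+2) F i%:Z.
Proof.
move=> s_range F0; rewrite sum_window_interior // -(sum_window_interior (s := 0)) //.
by apply: eq_bigr => i _; rewrite addr0.
Qed.

Section ScalarGridFunctions.
Variables (R : comUnitRingType) (N : nat).

Definition sgridfun := int -> int -> int -> R.

Definition supported (u : sgridfun) : Prop :=
  forall i j k, ~~ [&& in_grid N i, in_grid N j & in_grid N k] -> u i j k = 0.

Definition wsum (F : sgridfun) : R :=
  \sum_(0 <= i < N.+2) \sum_(0 <= j < N.+2) \sum_(0 <= k < N.+2) F i%:Z j%:Z k%:Z.

Lemma eq_wsum (F G : sgridfun) : (forall i j k, F i j k = G i j k) -> wsum F = wsum G.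
Proof. by move=> FG; do 3 apply: eq_bigr => ? _; apply: FG. Qed.

Lemma wsumD (F G : sgridfun) :
  wsum (fun i j k => F i j k + G i j k) = wsum F + wsum G.
Proof.
rewrite -big_split; apply: eq_bigr => i _.
by rewrite -big_split; apply: eq_bigr => j _; rewrite -big_split.
Qed.

Lemma wsumB (F G : sgridfun) :
  wsum (fun i j k => F i j k - G i j k) = wsum F - wsum G.
Proof.
rewrite -sumrB; apply: eq_bigr => i _.
by rewrite -sumrB; apply: eq_bigr => j _; rewrite -sumrB.
Qed.

Lemma wsumZ (c : R) (F : sgridfun) : wsum (fun i j k => c * F i j k) = c * wsum F.
Proof.
rewrite mulr_sumr; apply: eq_bigr => i _.
by rewrite mulr_sumr; apply: eq_bigr => j _; rewrite mulr_sumr.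
Qed.

Lemma wsum_sum (I : Type) (r : seq I) (F : I -> sgridfun) :
  wsum (fun i j k => \sum_(a <- r) F a i j k) = \sum_(a <- r) wsum (F a).
Proof.
rewrite /wsum; under eq_bigr do under eq_bigr do rewrite exchange_big.
by under eq_bigr do rewrite exchange_big; rewrite exchange_big.
Qed.

Definition sshift (d : 'I_3) (s : int) (u : sgridfun) : sgridfun :=
  fun i j k => match val d with
               | 0 => u (i + s) j k
               | 1 => u i (j + s) k
               | _ => u i j (k + s)
               end.

Lemma wsum_shift d s u : -1 <= s <= 1 -> supported u -> wsum (sshift d s u) = wsum u.
Proof.
move=> s_range u0; rewrite /wsum /sshift; case: d => [[|[|[|//]]] _] /=.
- pose F i := \sum_(0 <= j < N.+2) \sum_(0 <= k < N.+2) u i j%:Z k%:Z.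
  apply: (sum_window_shift (F := F)) => // i out_i.
  by rewrite /F big1 // => j _; rewrite big1 // => k _; rewrite u0 // (negbTE out_i).
- apply: eq_bigr => i _.
  pose F j := \sum_(0 <= k < N.+2) u i%:Z j k%:Z.
  apply: (sum_window_shift (F := F)) => // j out_j.
  by rewrite /F big1 // => k _; rewrite u0 // (negbTE out_j) andbF.
- do 2 apply: eq_bigr => ? _.
  by apply: sum_window_shift => // k out_k; rewrite u0 // (negbTE out_k) !andbF.
Qed.

Definition sdot (u v : sgridfun) : R := wsum (fun i j k => u i j k * v i j k).

Lemma sdotC u v : sdot u v = sdot v u.
Proof. by apply: eq_wsum => *; rewrite mulrC. Qed.

Lemma sdot_suml (I : Type) (r : seq I) (F : I -> sgridfun) v :
  sdot (fun i j k => \sum_(a <- r) F a i j k) v = \sum_(a <- r) sdot (F a) v.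
Proof. by rewrite -wsum_sum; apply: eq_wsum => *; rewrite mulr_suml. Qed.

Lemma sdot_sumr (I : Type) (r : seq I) (F : I -> sgridfun) u :
  sdot u (fun i j k => \sum_(a <- r) F a i j k) = \sum_(a <- r) sdot u (F a).
Proof. by rewrite sdotC sdot_suml; apply: eq_bigr => a _; rewrite sdotC. Qed.

Lemma sdot_shift d s u v : -1 <= s <= 1 -> supported u ->
  sdot u (sshift d s v) = sdot (sshift d (- s) u) v.
Proof.
move=> s_range u0; rewrite /sdot -[LHS](wsum_shift d (s := - s)); last 2 first.
- by lia.
- by move=> i j k /u0 ->; rewrite mul0r.
by apply: eq_wsum => i j k; rewrite /sshift; case: (val d) => [|[|?]]; rewrite addrNK.
Qed.

Section Differences.
Variable h : R.

Definition dp d (u : sgridfun) : sgridfun :=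
  fun i j k => h^-1 * (sshift d 1 u i j k - u i j k).
Definition dm d (u : sgridfun) : sgridfun :=
  fun i j k => h^-1 * (u i j k - sshift d (-1) u i j k).
Definition dc d (u : sgridfun) : sgridfun :=
  fun i j k => (2 * h)^-1 * (sshift d 1 u i j k - sshift d (-1) u i j k).

Lemma dc_sum (I : Type) (r : seq I) d (F : I -> sgridfun) :
  dc d (fun i j k => \sum_(a <- r) F a i j k)
  = fun i j k => \sum_(a <- r) dc d (F a) i j k.
Proof.
apply: grid_ext => i j k; rewrite /dc /sshift.
by case: (val d) => [|[|?]]; rewrite -sumrB mulr_sumr.
Qed.

Lemma sdot_dm d x v : supported v -> sdot (dm d x) v = - sdot x (dp d v).
Proof.
move=> v0.
have -> : sdot (dm d x) v = h^-1 * (sdot x v - sdot v (sshift d (-1) x)).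
  by rewrite -wsumB -wsumZ; apply: eq_wsum => i j k; rewrite /dm; ring.
have -> : sdot x (dp d v) = h^-1 * (sdot x (sshift d 1 v) - sdot x v).
  by rewrite -wsumB -wsumZ; apply: eq_wsum => i j k; rewrite /dp; ring.
by rewrite sdot_shift // opprK [sdot _ x]sdotC; ring.
Qed.

Lemma sdot_dc d x v : supported v -> sdot (dc d x) v = - sdot x (dc d v).
Proof.
move=> v0.
have -> : sdot (dc d x) v =
    (2 * h)^-1 * (sdot v (sshift d 1 x) - sdot v (sshift d (-1) x)).
  by rewrite -wsumB -wsumZ; apply: eq_wsum => i j k; rewrite /dc; ring.
have -> : sdot x (dc d v) =
    (2 * h)^-1 * (sdot x (sshift d 1 v) - sdot x (sshift d (-1) v)).
  by rewrite -wsumB -wsumZ; apply: eq_wsum => i j k; rewrite /dc; ring.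
rewrite [sdot v (sshift d 1 x)]sdot_shift // [sdot v (sshift d (-1) x)]sdot_shift //.
by rewrite opprK [sdot x (sshift d 1 v)]sdotC [sdot x (sshift d (-1) v)]sdotC; ring.
Qed.

End Differences.

End ScalarGridFunctions.

Section WindowSumPositivity.
Variables (R : numDomainType) (N : nat).
Implicit Type F : sgridfun R.

Lemma wsum_ge0 F : (forall i j k, 0 <= F i j k) -> 0 <= wsum N F.
Proof. by move=> F_ge0; do 3 apply: sumr_ge0 => ? _. Qed.

Lemma in_grid_window i : in_grid N i -> exists2 n : nat, i = n & (n < N.+2)%N.
Proof. by rewrite /in_grid => gi; exists `|i|%N; lia. Qed.

Lemma wsum_gt0 F i j k : (forall i j k, 0 <= F i j k) ->
  [&& in_grid N i, in_grid N j & in_grid N k] -> 0 < F i j k -> 0 < wsum N F.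
Proof.
move=> F_ge0 /and3P[gi gj gk].
case/in_grid_window: gi => ni -> lt_i; case/in_grid_window: gj => nj -> lt_j.
case/in_grid_window: gk => nk -> lt_k Fijk.
apply: (psumr_gt0 (i := ni)) => [i'||]; rewrite ?mem_index_iota //.
  by do 2 apply: sumr_ge0 => ? _.
apply: (psumr_gt0 (i := nj)) => [j'||]; rewrite ?mem_index_iota //.
  by apply: sumr_ge0 => ? _.
by apply: (psumr_gt0 (i := nk)) => [k'||]; rewrite ?mem_index_iota.
Qed.

End WindowSumPositivity.

Section Frobenius.
Variable R : rcfType.
Implicit Types A B X : 'M[R]_3.

Lemma frobC A B : frob A B = frob B A.
Proof. by apply: eq_bigr => i _; apply: eq_bigr => j _; rewrite mulrC. Qed.

Lemma frobDl A B X : frob (A + B) X = frob A X + frob B X.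
Proof.
rewrite /frob -big_split; apply: eq_bigr => i _.
by rewrite -big_split; apply: eq_bigr => j _; rewrite mxE mulrDl.
Qed.

Lemma frobZl c A X : frob (c *: A) X = c * frob A X.
Proof.
rewrite /frob mulr_sumr; apply: eq_bigr => i _.
by rewrite mulr_sumr; apply: eq_bigr => j _; rewrite mxE mulrA.
Qed.

Lemma frobNl A X : frob (- A) X = - frob A X.
Proof. by rewrite -scaleN1r frobZl mulN1r. Qed.

Lemma frob_trmx A B : frob A^T B = frob A B^T.
Proof.
rewrite /frob exchange_big; apply: eq_bigr => i _.
by apply: eq_bigr => j _; rewrite !mxE.
Qed.

Lemma frob1 B : frob 1%:M B = \tr B.
Proof.
rewrite /frob /mxtrace; apply: eq_bigr => i _.
rewrite (bigD1 i) //= big1 ?addr0 => [|j ji]; first by rewrite !mxE eqxx mul1r.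
by rewrite !mxE eq_sym (negbTE ji) mul0r.
Qed.

Lemma frob_symmetrize X c B : tracefree_sym B ->
  frob (X + X^T - c *: 1%:M) B = 2 * frob X B.
Proof.
move=> [B_sym B_tr].
rewrite !frobDl frobNl frobZl frob_trmx frob1 B_sym B_tr mulr0 subr0.
by rewrite mulr2n mulrDl mul1r.
Qed.

Lemma frob_ge0 A : 0 <= frob A A.
Proof. by apply: sumr_ge0 => i _; apply: sumr_ge0 => j _; rewrite -expr2 sqr_ge0. Qed.

Lemma frob_gt0 A : A != 0 -> 0 < frob A A.
Proof.
move=> /eqP A_neq0; have [i [j Aij]] : exists i j, A i j != 0.
  apply: NNPP => all0; apply: A_neq0; apply/matrixP => i j; rewrite !mxE.
  by have [//|Aij] := eqVneq (A i j) 0; exfalso; apply: all0; exists i, j.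
apply: (psumr_gt0 (i := i)) => [i' | | ]; rewrite ?mem_index_enum //.
  by apply: sumr_ge0 => j' _; rewrite -expr2 sqr_ge0.
apply: (psumr_gt0 (i := j)) => [j' | | ]; rewrite ?mem_index_enum // -expr2 ?sqr_ge0 //.
by rewrite lt0r sqr_ge0 sqrf_eq0 Aij.
Qed.

End Frobenius.

Section MatrixGridFunctions.
Variables (R : rcfType) (N : nat) (h : R).
Implicit Types Q X Y : gridfun R.

Definition entry (a b : 'I_3) Q : sgridfun R := fun i j k => Q i j k a b.

Lemma bc_entry a b Q : bc N Q -> supported N (entry a b Q).
Proof. by move=> Q0 i j k /Q0; rewrite /entry => ->; rewrite mxE. Qed.

Lemma entryC a b Q : (forall i j k, (Q i j k)^T = Q i j k) -> entry a b Q = entry b a Q.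
Proof.
by move=> Q_sym; apply: grid_ext => i j k; rewrite /entry -{1}Q_sym mxE.
Qed.

Lemma shift_entry d s Q i j k a b :
  shift d s Q i j k a b = sshift d s (entry a b Q) i j k.
Proof. by rewrite /shift /sshift; case: (val d) => [|[|?]]. Qed.

Lemma entry_Dp a b d Q : entry a b (Dp h d Q) = dp h d (entry a b Q).
Proof. by apply: grid_ext => i j k; rewrite {1}/entry !mxE shift_entry. Qed.

Lemma entry_Dm a b d Q : entry a b (Dm h d Q) = dm h d (entry a b Q).
Proof. by apply: grid_ext => i j k; rewrite {1}/entry !mxE shift_entry. Qed.

Lemma entry_Dc a b d Q : entry a b (Dc h d Q) = dc h d (entry a b Q).
Proof. by apply: grid_ext => i j k; rewrite {1}/entry !mxE !shift_entry. Qed.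

Definition mdot X Y : R := wsum N (fun i j k => frob (X i j k) (Y i j k)).

Lemma mdotC X Y : mdot X Y = mdot Y X.
Proof. by apply: eq_wsum => *; rewrite frobC. Qed.

Lemma mdot_entries X Y :
  mdot X Y = \sum_(a < 3) \sum_(b < 3) sdot N (entry a b X) (entry a b Y).
Proof. by rewrite /mdot /frob wsum_sum; apply: eq_bigr => a _; rewrite wsum_sum. Qed.

Lemma mdot_lap Q1 Q2 : bc N Q2 ->
  mdot (lap_h h Q1) Q2 = - \sum_(d < 3) mdot (Dp h d Q1) (Dp h d Q2).
Proof.
move=> Q20.
have -> : \sum_(d < 3) mdot (Dp h d Q1) (Dp h d Q2) = \sum_(a < 3) \sum_(b < 3)
    \sum_(d < 3) sdot N (dp h d (entry a b Q1)) (dp h d (entry a b Q2)).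
  under eq_bigr do rewrite mdot_entries.
  rewrite exchange_big; apply: eq_bigr => a _; rewrite exchange_big.
  by apply: eq_bigr => b _; apply: eq_bigr => d _; rewrite !entry_Dp.
rewrite mdot_entries -sumrN; apply: eq_bigr => a _; rewrite -sumrN; apply: eq_bigr => b _.
have -> : entry a b (lap_h h Q1)
    = fun i j k => \sum_(d < 3) dm h d (dp h d (entry a b Q1)) i j k.
  apply: grid_ext => i j k; rewrite {1}/entry summxE.
  by apply: eq_bigr => d _; rewrite -entry_Dp -entry_Dm.
rewrite sdot_suml -sumrN; apply: eq_bigr => d _.
by apply: sdot_dm; apply: bc_entry.
Qed.

Definition divh Q (s : 'I_3) : sgridfun R :=
  fun i j k => \sum_(be < 3) dc h be (entry s be Q) i j k.

Definition graddiv Q : gridfun R :=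
  fun i j k => \matrix_(w < 3, s < 3) \sum_(be < 3) Dc h w (Dc h be Q) i j k s be.

Lemma alpha_hE Q i j k : alpha_h h Q i j k =
  graddiv Q i j k + (graddiv Q i j k)^T
  - (2 / 3 * \sum_(be < 3) \sum_(ga < 3) Dc h be (Dc h ga Q) i j k be ga) *: 1%:M.
Proof. by apply/matrixP => w s; rewrite !mxE big_split mulr_natr. Qed.

Lemma entry_graddiv w s Q : entry w s (graddiv Q) = dc h w (divh Q s).
Proof.
rewrite /divh dc_sum; apply: grid_ext => i j k; rewrite {1}/entry mxE.
by apply: eq_bigr => be _; rewrite -entry_Dc -entry_Dc.
Qed.

Lemma mdot_alpha Q1 Q2 : inV N Q2 ->
  mdot (alpha_h h Q1) Q2 = -2 * \sum_(s < 3) sdot N (divh Q1 s) (divh Q2 s).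
Proof.
move=> [Q20 Q2_tf].
have -> : mdot (alpha_h h Q1) Q2 = 2 * mdot (graddiv Q1) Q2.
  by rewrite -wsumZ; apply: eq_wsum => i j k; rewrite alpha_hE frob_symmetrize.
have Q2_sym i j k : (Q2 i j k)^T = Q2 i j k by case: (Q2_tf i j k).
rewrite mdot_entries exchange_big mulNr -mulrN -sumrN; congr (2 * _).
apply: eq_bigr => s _; rewrite [divh Q2 s]/divh sdot_sumr -sumrN.
apply: eq_bigr => w _.
rewrite entry_graddiv sdot_dc; last exact: bc_entry.
by rewrite (entryC _ _ Q2_sym).
Qed.

End MatrixGridFunctions.

Section EnergyForm.
Variables (R : rcfType) (N : nat) (h dt M L1 L2 L3 : R) (P : gridfun R).
Implicit Types Q : gridfun R.

Definition energy Q1 Q2 : R :=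
  dt^-1 * mdot N Q1 Q2
  + M * L1 / 2 * \sum_(d < 3) mdot N (Dp h d Q1) (Dp h d Q2)
  + M / 2 * wsum N (fun i j k => frob (P i j k) (Q1 i j k) * frob (P i j k) (Q2 i j k))
  + M * (L2 + L3) / 2 * \sum_(s < 3) sdot N (divh h Q1 s) (divh h Q2 s).

Lemma energyC Q1 Q2 : energy Q1 Q2 = energy Q2 Q1.
Proof.
rewrite /energy mdotC; congr (_ + _ * _ + _ * _ + _ * _).
- by apply: eq_bigr => d _; rewrite mdotC.
- by apply: eq_wsum => *; rewrite mulrC.
- by apply: eq_bigr => s _; rewrite sdotC.
Qed.

Lemma mdot_gt0 Q : bc N Q -> Q <> (fun _ _ _ => 0) -> 0 < mdot N Q Q.
Proof.
move=> Q0 Q_neq0; have [i [j [k Qijk]]] : exists i j k, Q i j k != 0.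
  apply: NNPP => all0; apply: Q_neq0; apply: grid_ext => i j k.
  by have [//|Qijk] := eqVneq (Q i j k) 0; exfalso; apply: all0; exists i, j, k.
apply: (wsum_gt0 (i := i) (j := j) (k := k)); first by move=> *; apply: frob_ge0.
  by apply: contraT => /Q0 Q_out; rewrite Q_out eqxx in Qijk.
exact: frob_gt0.
Qed.

Lemma energy_gt0 Q : 0 < dt -> 0 <= M -> 0 <= L1 -> 0 <= L2 + L3 ->
  bc N Q -> Q <> (fun _ _ _ => 0) -> 0 < energy Q Q.
Proof.
move=> dt_gt0 M_ge0 L1_ge0 L23_ge0 Q0 Q_neq0; rewrite /energy.
have sdot_ge0 (u : sgridfun R) : 0 <= sdot N u u.
  by apply: wsum_ge0 => i j k; rewrite -expr2 sqr_ge0.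
have mdot_ge0 (X : gridfun R) : 0 <= mdot N X X.
  by apply: wsum_ge0 => *; apply: frob_ge0.
have half_ge0 : 0 <= 2^-1 :> R by rewrite invr_ge0 ler0n.
rewrite -!addrA ltr_pwDl ?mulr_gt0 ?invr_gt0 ?mdot_gt0 //.
rewrite !addr_ge0 // !mulr_ge0 //.
- by apply: sumr_ge0 => d _.
- by apply: wsum_ge0 => i j k; rewrite -expr2 sqr_ge0.
- by apply: sumr_ge0 => s _.
Qed.

End EnergyForm.

Section Operator.
Variables (R : rcfType) (a b c A0 L1 L2 L3 M dt : R) (N : nat) (Qn Qn1 : gridfun R).
Local Notation h := (hN R N).
Local Notation P := (Pbar a b c A0 Qn Qn1).
Local Notation A := (opA a b c A0 L1 L2 L3 M dt N Qn Qn1).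

Lemma hN_gt0 : 0 < h.
Proof. by rewrite invr_gt0 ltr0Sn. Qed.

Lemma inner_hE X Y : inner_h N X Y = h ^+ 3 * mdot N X Y.
Proof. by []. Qed.

Lemma mdot_opA Q1 Q2 : inV N Q2 -> mdot N (A Q1) Q2 = energy N h dt M L1 L2 L3 P Q1 Q2.
Proof.
move=> VQ2; have [Q20 _] := VQ2.
have -> : mdot N (A Q1) Q2 = dt^-1 * mdot N Q1 Q2 - M * L1 / 2 * mdot N (lap_h h Q1) Q2
    + M / 2 * wsum N (fun i j k => frob (P i j k) (Q1 i j k) * frob (P i j k) (Q2 i j k))
    - M * (L2 + L3) / 4 * mdot N (alpha_h h Q1) Q2.
  rewrite -!wsumZ -wsumB -wsumD -wsumB; apply: eq_wsum => i j k.
  rewrite /opA /=; move: (P i j k) => Pijk.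
  by rewrite !frobDl !frobNl !frobZl; ring.
rewrite mdot_lap // mdot_alpha // /energy.
by congr (_ + _ + _ + _); [rewrite mulrN opprK | field].
Qed.

End Operator.

Theorem theorem4p5 (R : rcfType) (a b c L1 L2 L3 M dt A0 : R)
  (hc : 0 < c) (hL1 : 0 < L1) (hL2 : 0 < L2) (hL3 : 0 < L3) (hM : 0 < M)
  (hdt : 0 < dt) (hA0 : 0 < A0)
  (hinf : exists m : R, 0 < m /\
      forall Q : 'M[R]_3, symmetric_mx Q -> m <= bulk a b c A0 Q)
  (N : nat) (Qn Qn1 : gridfun R) (hQn : inV N Qn) (hQn1 : inV N Qn1) :
  (forall Q1 Q2 : gridfun R, inV N Q1 -> inV N Q2 ->
     inner_h N (opA a b c A0 L1 L2 L3 M dt N Qn Qn1 Q1) Q2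
     = inner_h N Q1 (opA a b c A0 L1 L2 L3 M dt N Qn Qn1 Q2)) /\
  (forall Q : gridfun R, inV N Q -> Q <> (fun _ _ _ => 0) ->
     0 < inner_h N (opA a b c A0 L1 L2 L3 M dt N Qn Qn1 Q) Q).
Proof.
split=> [Q1 Q2 VQ1 VQ2 | Q VQ Q_neq0].
  by rewrite inner_hE mdot_opA // inner_hE mdotC mdot_opA // energyC.
rewrite inner_hE mdot_opA // mulr_gt0 ?exprn_gt0 ?hN_gt0 //.
by apply: energy_gt0; rewrite ?ltW ?addr_gt0 //; case: VQ.
Qed.
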